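(* Let $M$ be a gasket automaton over $\Sigma=\{1,\dots,N\}$. For any $\mathbf x,\mathbf y,\mathbf z\in\Sigma^\infty$, $$\min\{T_M(\mathbf x,\mathbf y),T_M(\mathbf x,\mathbf z)\}\le T_M(\mathbf y,\mathbf z)+1.$$
   Context: A $\Sigma$-automaton $M$ has finite state set $Q=Q_0\cup\{Id,Exit\}$, input alphabet $\Sigma^2$, initial state $Id$, final state $Exit$, transition $\delta:Q\times\Sigma^2\to Q$ with $\delta(Id,(i,j))=Id$ iff $i=j$. Itinerary of $(\mathbf x,\mathbf y)\in\Sigma^\infty\times\Sigma^\infty$: $S_0=Id$, $S_k=\delta(S_{k-1},(x_k,y_k))$, stopped at $Exit$; surviving time $T_M(\mathbf x,\mathbf y)$ = largest $k$ with $S_k\neq Exit$ ($\infty$ if $Exit$ never reached; $\infty+1=\infty$). Triangle automaton: $\alpha,\beta,\gamma$ distinct elements of $\Sigma\cup\{-1,-2,-3\}$; $Q=\{S_{uv}:u\neq v\in\{\alpha,\beta,\gamma\}\}\cup\{Id,Exit\}$; $\delta(Id,(i,j))=S_{uv}\Rightarrow\delta(Id,(j,i))=S_{vu}$; $\delta(S_{uv},(i,j))=S_{uv}$ if $(i,j)=(v,u)$, else $Exit$. $\mathcal P_{uv}=\{(i,j):\delta(Id,(i,j))=S_{uv}\}$, $i\triangleleft_{uv}j$ iff $(i,j)\in\mathcal P_{uv}$ (iff $j\triangleleft_{vu}i$); $j$ is $uv$-minimal if there is no $i$ with $i\triangleleft_{uv}j$. Gasket automaton: triangle automaton with (Uniqueness)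 $i\triangleleft_{uv}j,i\triangleleft_{uv}j'\Rightarrow j=j'$; (Gathering) for $a,b,c\in\Sigma$ any two of $a\triangleleft_{\alpha\gamma}c$, $a\triangleleft_{\beta\gamma}b$, $b\triangleleft_{\alpha\beta}c$ imply the third; (Boundary) if $\alpha\in\Sigma$ it is $\alpha\gamma$- and $\alpha\beta$-minimal; if $\beta\in\Sigma$ it is $\beta\gamma$- and $\beta\alpha$-minimal; if $\gamma\in\Sigma$ it is $\gamma\alpha$- and $\gamma\beta$-minimal. *)

From HB Require Import structures.
From mathcomp Require Import all_boot.
From Stdlib Require Import ClassicalEpsilon.
Set Implicit Arguments. Unset Strict Implicit. Unset Printing Implicit Defensive.

(* Infinite words x in Sigma^infty are functions nat -> Sigma, 0-indexed:
   x k is the letter x_{k+1} of the paper. *)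

(* Extended naturals N u {oo}: None = oo. *)
Definition enat := option nat.
Definition esucc (t : enat) : enat := omap S t.
Definition emin (a b : enat) : enat :=
  match a, b with
  | None, _ => b
  | _, None => a
  | Some m, Some n => Some (minn m n)
  end.
Definition ele (a b : enat) : Prop :=
  match b with
  | None => True
  | Some n => match a with None => False | Some m => (m <= n)%N end
  end.

Section Automaton.
Variables (Sigma : Type) (Q : eqType).
Variables (delta : Q -> Sigma -> Sigma -> Q) (q_id q_exit : Q).

Fixpoint itinerary (x y : nat -> Sigma) (k : nat) : Q :=
  match k with
  | 0 => q_id
  | k'.+1 => let s := itinerary x y k' in
             if s == q_exit then q_exit else delta s (x k') (y k')
  end.

(* Surviving time: largest k with S_k <> Exit, i.e. (first hitting time of
   Exit) - 1, and oo if Exit is never reached. *)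
Definition surviving_time (x y : nat -> Sigma) : enat :=
  match excluded_middle_informative
          (exists k, itinerary x y k == q_exit) with
  | left H => Some (ex_minn H).-1
  | right _ => None
  end.
End Automaton.

(* The three corners alpha, beta, gamma are indexed by 0, 1, 2 : 'I_3.
   Their labels live in Sigma u {-1,-2,-3}, modelled as 'I_N + 'I_3
   (inr k standing for -(k+1)). *)
Definition dpair := {p : 'I_3 * 'I_3 | p.1 != p.2}.

Inductive tstate := TId | TExit | TS of dpair.

Definition tstate_enc (s : tstate) : option (option dpair) :=
  match s with TId => None | TExit => Some None | TS p => Some (Some p) end.
Definition tstate_dec (o : option (option dpair)) : tstate :=
  match o with None => TId | Some None => TExit | Some (Some p) => TS p end.
Lemma tstate_encK : cancel tstate_enc tstate_dec. Proof. by case. Qed.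
HB.instance Definition _ := Finite.copy tstate (can_type tstate_encK).

Section Triangle.
Variables (N : nat) (lab : 'I_3 -> 'I_N + 'I_3)
          (f : 'I_N -> 'I_N -> tstate).

Definition prec (u v : 'I_3) (i j : 'I_N) : bool :=
  match f i j with TS p => val p == (u, v) | _ => false end.

Definition tri_delta (s : tstate) (i j : 'I_N) : tstate :=
  match s with
  | TId => f i j
  | TExit => TExit
  | TS p => if (inl i, inl j) == (lab (val p).2, lab (val p).1)
            then TS p else TExit
  end.

Definition T_M (x y : nat -> 'I_N) : enat :=
  surviving_time tri_delta TId TExit x y.

Definition alpha : 'I_3 := inord 0.
Definition beta : 'I_3 := inord 1.
Definition gamma : 'I_3 := inord 2.

Definition triangle_automaton : Prop :=
  [/\ injective lab,
      forall i j, f i j = TId <-> i = j &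
      forall i j (p : dpair), f i j = TS p ->
        exists q : dpair, val q = ((val p).2, (val p).1) /\ f j i = TS q].

Definition minimal (u v : 'I_3) (j : 'I_N) : Prop := forall i, ~~ prec u v i j.

Definition gasket_automaton : Prop :=
  [/\
      forall u v i j j', prec u v i j -> prec u v i j' -> j = j',
      forall a b c,
        let A := prec alpha gamma a c in
        let B := prec beta gamma a b in
        let C := prec alpha beta b c in
        [/\ A -> B -> C, A -> C -> B & B -> C -> A] &
      [/\ forall a, lab alpha = inl a -> minimal alpha gamma a /\ minimal alpha beta a,
          forall b, lab beta = inl b -> minimal beta gamma b /\ minimal beta alpha b &
          forall c, lab gamma = inl c -> minimal gamma alpha c /\ minimal gamma beta c]].
End Triangle.

From mathcomp Require Import all_boot.
From Stdlib Require Import ClassicalEpsilon.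
Set Implicit Arguments. Unset Strict Implicit. Unset Printing Implicit Defensive.

(* The pair (x, y) is still alive at time m iff x and y agree before m, or
   they first differ at some k < m with x_k <|_uv y_k and from then on x reads
   the label of v and y that of u.  Compare the first disagreements k of
   (x, y) and k' of (x, z), both alive at time m + 1.  If k < k', then y and z
   first differ at k with y_k <|_vu z_k = x_k, and z follows x until k'; a split
   k' < m is impossible, since then both runs dictate x_(k'+1), so x_k' is the
   label of the corner v' of the second run, against Boundary.  If k = k', the
   letter x_(k+1) shows that both runs share their corner v, and Uniqueness and
   Gathering give y_k <|_(u'u) z_k. *)

Definition agree_below (T : Type) (k : nat) (x y : nat -> T) : Prop :=
  forall i, i < k -> x i = y i.

Section SurvivingTime.
Variables (Sigma : Type) (Q : eqType).
Variables (delta : Q -> Sigma -> Sigma -> Q) (q_id q_exit : Q).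

Local Notation run := (itinerary delta q_id q_exit).

Lemma itinerary_exit_absorbing x y k m :
  k <= m -> run x y k = q_exit -> run x y m = q_exit.
Proof.
move=> /subnKC <- exit_k; elim: (m - k) => [|d IH]; first by rewrite addn0.
by rewrite addnS /= IH eqxx.
Qed.

Lemma surviving_time_le x y n :
  ele (surviving_time delta q_id q_exit x y) (Some n) <-> run x y n.+1 = q_exit.
Proof.
rewrite /surviving_time; case: excluded_middle_informative => [ex | noex] /=.
  case: ex_minnP => k /eqP exit_k min_k.
  have -> : (k.-1 <= n) = (k <= n.+1) by case: k {exit_k min_k}.
  split=> [kn | exit_n]; first exact: itinerary_exit_absorbing kn exit_k.
  by apply: min_k; apply/eqP.
by split=> // exit_n; apply: noex; exists n.+1; apply/eqP.
Qed.

End SurvivingTime.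

Lemma ele_emin_Some a b n :
  ele (emin a b) (Some n) <-> ele a (Some n) \/ ele b (Some n).
Proof.
case: a b => [a|] [b|] //=; try tauto.
by rewrite geq_min; split=> /orP.
Qed.

Lemma corner_cases (u : 'I_3) : [\/ u = alpha, u = beta | u = gamma].
Proof.
case: u => [[|[|[|//]]] lt3]; [apply: Or31 | apply: Or32 | apply: Or33];
  by apply: val_inj; rewrite /= inordK.
Qed.

Section GasketAutomaton.
Variables (N : nat) (lab : 'I_3 -> 'I_N + 'I_3) (f : 'I_N -> 'I_N -> tstate).
Hypothesis tri : triangle_automaton lab f.
Hypothesis gas : gasket_automaton lab f.

Local Notation run := (itinerary (tri_delta lab f) TId TExit).

Lemma lab_inj : injective lab. Proof. by case: tri. Qed.

Lemma f_eq_TId a b : f a b = TId <-> a = b. Proof. by case: tri. Qed.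

Lemma precP u v a b :
  reflect (exists p : dpair, val p = (u, v) /\ f a b = TS p) (prec f u v a b).
Proof.
rewrite /prec; case: (f a b) => [||p]; try by constructor=> -[? []].
by apply: (iffP eqP) => [<- | [q [<- [->]]]]; first exists p.
Qed.

Lemma prec_neq u v a b : prec f u v a b -> u != v.
Proof. by case/precP=> p [Ep _]; have := valP p; rewrite Ep. Qed.

Lemma prec_fun u v u' v' a b :
  prec f u v a b -> prec f u' v' a b -> (u, v) = (u', v').
Proof. by case/precP=> p [<- fab] /precP[q [<-]]; rewrite fab => -[->]. Qed.

Lemma prec_sym u v a b : prec f u v a b -> prec f v u b a.
Proof.
case/precP=> p [Ep fab]; case: tri => _ _ /(_ _ _ _ fab)[q [Eq fba]].
by apply/precP; exists q; rewrite Eq Ep.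
Qed.

Lemma prec_uniq u v a b b' : prec f u v a b -> prec f u v a b' -> b = b'.
Proof. by case: gas => uniq _ _; apply: uniq. Qed.

Lemma gathering u u' w a y z :
  u != u' -> prec f u w a y -> prec f u' w a z -> prec f u' u y z.
Proof.
case: gas => _ gather _ uu' P Q; have uw := prec_neq P; have u'w := prec_neq Q.
move: uu' uw u'w P Q.
case: (corner_cases u) => ->; case: (corner_cases u') => ->;
  case: (corner_cases w) => ->; rewrite ?eqxx // => _ _ _ P Q.
(* Each ordering of the corners is one Gathering implication, up to symmetry. *)
- by have [ab_c _ _] := gather a z y; exact/prec_sym/ab_c.
- by have [_ _ bc_a] := gather z a y; exact/prec_sym/bc_a/P/prec_sym.
- by have [ab_c _ _] := gather a y z; exact: ab_c.
- by have [_ ac_b _] := gather z y a; exact/prec_sym/ac_b/prec_sym/P/prec_sym.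
- by have [_ _ bc_a] := gather y a z; exact/bc_a/Q/prec_sym.
- by have [_ ac_b _] := gather y z a; exact/ac_b/prec_sym/Q/prec_sym.
Qed.

Lemma corner_minimal u v a : u != v -> lab u = inl a -> minimal f u v a.
Proof.
case: gas => _ _ [Ba Bb Bc].
case: (corner_cases u) => ->; case: (corner_cases v) => ->; rewrite ?eqxx // => _ lu.
all: first [by case: (Ba _ lu) | by case: (Bb _ lu) | by case: (Bc _ lu)].
Qed.

Lemma corner_not_prec u v a b : lab v = inl a -> ~~ prec f u v a b.
Proof.
move=> lv; apply/negP=> pr; have ba := prec_sym pr.
by have /negP := corner_minimal (prec_neq ba) lv b; apply.
Qed.

(* (x, y) enters the state S_uv at step k and is still there at time m. *)
Definition stays (u v : 'I_3) (k m : nat) (x y : nat -> 'I_N) : Prop :=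
  [/\ agree_below k x y, prec f u v (x k) (y k)
    & forall i, k < i < m -> inl (x i) = lab v /\ inl (y i) = lab u].

Definition survives (m : nat) (x y : nat -> 'I_N) : Prop :=
  agree_below m x y \/ exists u v k, k < m /\ stays u v k m x y.

Lemma stays_restrict u v k m m' x y :
  m' <= m -> stays u v k m x y -> stays u v k m' x y.
Proof.
move=> le_m'm [agr pr tail]; split=> // i /andP[ki im'].
by apply: tail; rewrite ki (leq_trans im' le_m'm).
Qed.

Lemma stays_survives u v k m x y : stays u v k m x y -> survives m x y.
Proof.
move=> st; case: (ltnP k m) => [km | mk]; first by right; exists u, v, k.
by left=> i im; case: st => agr _ _; apply: agr; exact: leq_trans im mk.
Qed.

Lemma survives_restrict m m' x y : m' <= m -> survives m x y -> survives m' x y.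
Proof.
move=> le_m'm [agr | [u [v [k [_ st]]]]].
  by left=> i im'; apply: agr; exact: leq_trans im' le_m'm.
exact: stays_survives (stays_restrict le_m'm st).
Qed.

Lemma survives_sym m x y : survives m x y -> survives m y x.
Proof.
case=> [agr | [u [v [k [km [agr pr tail]]]]]]; first by left=> i /agr.
right; exists v, u, k; split=> //; split=> [i /agr // | | i /tail[] //].
exact: prec_sym.
Qed.

Lemma survives_agree_l m x x' y :
  agree_below m x x' -> survives m x y -> survives m x' y.
Proof.
move=> xx' [agr | [u [v [k [km [agr pr tail]]]]]].
  by left=> i im; rewrite -xx' ?agr.
right; exists u, v, k; split=> //; split=> [i ik | | i /andP[ki im]].
- by rewrite -xx' ?agr //; exact: ltn_trans ik km.
- by rewrite -xx'.
- by rewrite -xx' //; apply: tail; rewrite ki im.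
Qed.

Lemma itinerary_agree m x y : agree_below m x y -> run x y m = TId.
Proof.
elim: m => //= m IH agr; rewrite IH => [/= | i im]; last exact/agr/ltnW.
by apply/f_eq_TId/agr.
Qed.

Lemma itinerary_stays u v k m x y :
  k < m -> stays u v k m x y -> run x y m = f (x k) (y k).
Proof.
elim: m => // m IH; rewrite ltnS leq_eqVlt => /orP[/eqP-> | km] st.
  by case: st => agr _ _; rewrite /= itinerary_agree.
have [_ /precP[p [Ep fk]] tail] := st.
have /tail[xm ym] : k < m < m.+1 by rewrite km ltnSn.
rewrite /= IH //; last exact: stays_restrict (leqnSn m) st.
by rewrite fk /= Ep xm ym eqxx.
Qed.

Lemma itinerary_survivesP m x y : run x y m != TExit <-> survives m x y.
Proof.
split; last first.
  case=> [agr | [u [v [k [km st]]]]]; first by rewrite itinerary_agree.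
  by rewrite (itinerary_stays km st); case: st => _ /precP[p [_ ->]].
elim: m => [|m IH] alive; first by left.
have : survives m x y.
  apply: IH; apply: contra alive => /eqP exit_m; apply/eqP.
  exact: itinerary_exit_absorbing (leqnSn m) exit_m.
case=> [agr | [u [v [k [km st]]]]].
  move: alive; rewrite /= itinerary_agree //=.
  case fm: (f (x m) (y m)) => [||p] // _.
    left=> i; rewrite ltnS leq_eqVlt => /orP[/eqP-> | /agr //].
    exact/f_eq_TId.
  right; exists (val p).1, (val p).2, m; split=> //; split=> // [|i].
    by apply/precP; exists p; rewrite -surjective_pairing.
  by rewrite ltnS => /andP[mi im]; rewrite leqNgt mi in im.
move: alive; rewrite /= (itinerary_stays km st).
have [agr pr tail] := st; have /precP[p [Ep fk]] := pr.
rewrite fk /= Ep /=.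
case: (eqVneq (inl (x m), inl (y m)) (lab v, lab u)) => [[xm ym] _ | _];
  last by rewrite eqxx.
right; exists u, v, k; split; first exact: ltnW.
split=> // i /andP[ki]; rewrite ltnS leq_eqVlt => /orP[/eqP-> // | im].
by apply: tail; rewrite ki im.
Qed.

Lemma stays_before_survives u v u' v' k k' m x y z :
  k < k' -> k' <= m -> stays u v k m.+1 x y -> stays u' v' k' m.+1 x z ->
  survives m y z.
Proof.
move=> kk' k'm [agr pr tail] [agr' pr' tail'].
case: (ltnP k' m) => [k'_lt_m | m_le_k'].
  have /tail[xk' _] : k < k' < m.+1 by rewrite kk' ltnS.
  have /tail[xk'1 _] : k < k'.+1 < m.+1 by rewrite !ltnS (ltnW kk').
  have /tail'[xk'1' _] : k' < k'.+1 < m.+1 by rewrite ltnSn ltnS.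
  have v'v : v' = v by apply: lab_inj; rewrite -xk'1' xk'1.
  by move: pr'; rewrite v'v (negPf (corner_not_prec _ _ (esym xk'))).
apply: (@stays_survives v u k); split.
- by move=> i ik; rewrite -agr // agr' //; exact: ltn_trans ik kk'.
- by rewrite -agr' //; exact: prec_sym.
- move=> i /andP[ki im]; have /tail[xi yi] : k < i < m.+1 by rewrite ki ltnW.
  by rewrite -agr' //; exact: leq_trans im m_le_k'.
Qed.

Lemma stays_same_survives u v u' v' k m x y z :
  stays u v k m.+1 x y -> stays u' v' k m.+1 x z -> survives m y z.
Proof.
move=> [agr pr tail] [agr' pr' tail'].
have agr_yz : agree_below k y z by move=> i ik; rewrite -agr // agr'.
case: (ltnP k m) => [km | mk]; last by left=> i im; apply/agr_yz/(leq_trans im).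
have /tail[xk1 _] : k < k.+1 < m.+1 by rewrite ltnSn ltnS.
have /tail'[xk1' _] : k < k.+1 < m.+1 by rewrite ltnSn ltnS.
have v'v : v' = v by apply: lab_inj; rewrite -xk1' xk1.
subst v'; case: (eqVneq (y k) (z k)) => [yz | yz].
  rewrite -yz in pr'; case: (prec_fun pr pr') => u'u; subst u'.
  left=> i im; case: (ltngtP i k) => [ik | ki | -> //]; first exact: agr_yz.
  have /tail[_ yi] : k < i < m.+1 by rewrite ki ltnW.
  have /tail'[_ zi] : k < i < m.+1 by rewrite ki ltnW.
  by move: yi; rewrite -zi => -[].
have uu' : u != u'.
  by apply: contra yz => /eqP uu'; rewrite uu' in pr; apply/eqP/(prec_uniq pr pr').
right; exists u', u, k; split=> //; split=> // [|i /andP[ki im]].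
  exact: gathering uu' pr pr'.
have /tail[_ yi] : k < i < m.+1 by rewrite ki ltnW.
by have /tail'[_ zi] : k < i < m.+1 by rewrite ki ltnW.
Qed.

Lemma survives_triangle m x y z :
  survives m.+1 x y -> survives m.+1 x z -> survives m y z.
Proof.
case=> [xy | [u [v [k [km st]]]]].
  move/(survives_restrict (leqnSn m)); apply: survives_agree_l.
  by move=> i im; apply/xy/ltnW.
case=> [xz | [u' [v' [k' [k'm st']]]]].
  have xz' : agree_below m x z by move=> i im; apply/xz/ltnW.
  have xy := survives_restrict (leqnSn m) (stays_survives st).
  exact: survives_sym (survives_agree_l xz' xy).
move: st'; case: (ltngtP k k') => [kk' | k'k | <-] st'.
- exact: stays_before_survives kk' k'm st st'.
- exact/survives_sym/(stays_before_survives k'k km st' st).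
- exact: stays_same_survives st st'.
Qed.

Lemma itinerary_triangle m x y z :
  run x y m.+1 != TExit -> run x z m.+1 != TExit -> run y z m != TExit.
Proof. rewrite !itinerary_survivesP; exact: survives_triangle. Qed.

End GasketAutomaton.

Theorem proposition3p1 (N : nat) (lab : 'I_3 -> 'I_N + 'I_3)
  (f : 'I_N -> 'I_N -> tstate)
  (Htri : triangle_automaton lab f) (Hgas : gasket_automaton lab f)
  (x y z : nat -> 'I_N) :
  ele (emin (T_M lab f x y) (T_M lab f x z)) (esucc (T_M lab f y z)).
Proof.
rewrite /T_M; case Tyz: (surviving_time _ _ _ y z) => [n|] //.
rewrite [esucc _]/= ele_emin_Some !surviving_time_le.
set run := itinerary (tri_delta lab f) TId TExit.
have yz_exit : run y z n.+1 = TExit by apply/surviving_time_le; rewrite Tyz /=.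
case: (eqVneq (run x y n.+2) TExit) => [|xy]; first by left.
case: (eqVneq (run x z n.+2) TExit) => [|xz]; first by right.
have := itinerary_triangle Htri Hgas xy xz.
by rewrite -/run yz_exit eqxx.
Qed.
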